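(* Let $(V,\mathbf{1}^\vee,D,\mathcal{Y},\check S)$ be a braided multiplicative vertex coalgebra over a commutative ring $R$. Then: (1) (translation) $\mathcal{Y}(z)D(w)\equiv(\mathrm{id}\otimes D(w))\mathcal{Y}(zw)$; (2) (colocality) $(\check S(w/z)\otimes\mathrm{id})(\mathrm{id}\otimes\mathcal{Y}(w))\mathcal{Y}(z)\equiv(\mathrm{id}\otimes\mathcal{Y}(z))\mathcal{Y}(w)$.
   Context: A braided multiplicative vertex $R$-coalgebra consists of: an $R$-module $V$ with restricted dual $V^*$; a covacuum $\mathbf{1}^\vee\in V^*$; an $R$-linear translation operator $D(z)\colon V\to V[z^{\pm1}]$ with $D(z)D(w)=D(zw)$; a vertex coproduct $\mathcal{Y}(z)\colon V\to V\otimes V(\!(z^{-1})\!)$; and a braiding operator $\check S(z)\colon V\otimes V\to V\otimes V(\!(z^{-1})\!)$ which is unitary, $\check S(z^{-1})\check S(z)=\mathrm{id}$. Axioms: (covacuum) $(\mathbf{1}^\vee\otimes\mathrm{id})\mathcal{Y}(z)=\mathrm{id}$; $(\mathrm{id}\otimes\mathbf{1}^\vee)\mathcal{Y}(z)a\in V[z^{\pm1}]$ with $(\mathrm{id}\otimes\mathbf{1}^\vee)\mathcal{Y}(1)a=a$ for all $a\in V$; $(\mathbf{1}^\vee\otimes\mathrm{id})\check S(z)=\mathrm{id}\otimes\mathbf{1}^\vee$. (skew symmetry) $\check S(z^{-1})\mathcal{Y}(z)=\mathcal{Y}(z^{-1})D(z)$, the left side being well-defined. (weak coassociativity) $(\mathcal{Y}(z)\otimes\mathrm{id})\mathcal{Y}(w)\equiv(\mathrm{id}\otimes\mathcal{Y}(w))\mathcal{Y}(zw)$.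 (Yang–Baxter) $(\check S(z)\otimes\mathrm{id})(\mathrm{id}\otimes\check S(zw))(\check S(w)\otimes\mathrm{id})\equiv(\mathrm{id}\otimes\check S(w))(\check S(zw)\otimes\mathrm{id})(\mathrm{id}\otimes\check S(z))$ and $(\mathcal{Y}(z)\otimes\mathrm{id})\check S(w)\equiv(\mathrm{id}\otimes\check S(w))(\check S(zw)\otimes\mathrm{id})(\mathrm{id}\otimes\mathcal{Y}(z))$. Here, for operators with values in $V^{\otimes n}$ in formal variables $z,w$, $A\equiv B$ means that after applying any element of $(V^* )^{\otimes n}$ both sides belong to, and are equal in, $V^*[\![z^{-1},w^{-1}]\!][z,w]$ (as functionals of the input). *)

From mathcomp Require Import all_boot all_order all_algebra.
Set Implicit Arguments. Unset Strict Implicit. Unset Printing Implicit Defensive.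
Import Order.TTheory GRing.Theory Num.Theory.
Local Open Scope ring_scope.

Section BMVC.
Variables (R : comNzRingType) (V : lmodType R).

(* An element of V (x) V is represented by a finite formal sum of pure
   tensors  sum_i x_i (x) y_i  (a list of pairs); similarly for V^{(x)3}.
   Two representatives are equal in V (x) V iff every R-bilinear map into
   every R-module takes the same value on them (universal property). *)
Definition T2 := seq (V * V).
Definition T3 := seq (V * V * V).

Definition bilinear_map (M : lmodType R) (b : V -> V -> M) : Prop :=
  (forall c x x' y, b (c *: x + x') y = c *: b x y + b x' y) /\
  (forall c x y y', b x (c *: y + y') = c *: b x y + b x y').

Definition teq2 (t t' : T2) : Prop :=
  forall (M : lmodType R) (b : V -> V -> M), bilinear_map b ->
    \sum_(p <- t) b p.1 p.2 = \sum_(p <- t') b p.1 p.2.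

Definition tscale2 (c : R) (t : T2) : T2 := [seq (c *: p.1, p.2) | p <- t].

(* pairing of (Vdual)^{(x)2}, (Vdual)^{(x)3} (finite sums of pure tensors of
   functionals) with V^{(x)2}, V^{(x)3} *)
Definition pair2 (psi : seq ((V -> R) * (V -> R))) (t : T2) : R :=
  \sum_(f <- psi) \sum_(p <- t) f.1 p.1 * f.2 p.2.
Definition pair3 (psi : seq ((V -> R) * (V -> R) * (V -> R))) (t : T3) : R :=
  \sum_(f <- psi) \sum_(p <- t) f.1.1 p.1.1 * f.1.2 p.1.2 * f.2 p.2.

Definition sums (f : int -> R) (r : R) : Prop :=
  exists N : nat, (forall l : int, N%:Z < `|l| -> f l = 0) /\
    r = \sum_(i < N.*2.+1) f (i%:Z - N%:Z).

Definition tsums2 (f : int -> T2) (t : T2) : Prop :=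
  exists N : nat, (forall l : int, N%:Z < `|l| -> teq2 (f l) [::]) /\
    teq2 t (flatten [seq f (i%:Z - N%:Z) | i <- iota 0 N.*2.+1]).

Definition single (X : Type) (l : int) (x : seq X) : seq X :=
  if l == 0 then x else [::].

(* F m n l x (resp. G m n l x) is the l-th summand of the coefficient of
   z^m w^n of the (already paired) left (resp. right) hand side evaluated
   at the input x.  A === B: for all (m,n,x) these are summable, with the
   same sums c m n x; each coefficient functional c m n lies in the
   restricted dual Xd of the input space; and the degrees in z and in w
   are bounded above uniformly, i.e. the result lies in
   Xd[[z^-1,w^-1]][z,w]. *)
Definition formal_equiv (X : Type) (Xd : (X -> R) -> Prop)
    (F G : int -> int -> int -> X -> R) : Prop :=
  exists c : int -> int -> X -> R,
    (forall m n x, sums (fun l => F m n l x) (c m n x) /\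
                   sums (fun l => G m n l x) (c m n x)) /\
    (forall m n, Xd (c m n)) /\
    (exists N : int, forall m n x, (N < m \/ N < n) -> c m n x = 0).

Variable Vd : (V -> R) -> Prop.  (* the restricted dual Vdual inside Hom(V,R) *)

Definition dual2 (psi : seq ((V -> R) * (V -> R))) : Prop :=
  foldr (fun f P => (Vd f.1 /\ Vd f.2) /\ P) True psi.
Definition dual3 (psi : seq ((V -> R) * (V -> R) * (V -> R))) : Prop :=
  foldr (fun f P => [/\ Vd f.1.1, Vd f.1.2 & Vd f.2] /\ P) True psi.

Definition Vd2 (f : T2 -> R) : Prop :=
  exists psi, dual2 psi /\ forall t, f t = pair2 psi t.
Definition Vd3 (f : T3 -> R) : Prop :=
  exists psi, dual3 psi /\ forall t, f t = pair3 psi t.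

(* D k      = coefficient of z^k of D(z)            : V -> V
   Y k      = coefficient of z^k of Y(z)            : V -> V (x) V
   S k v u  = coefficient of z^k of S(z)(v (x) u)   : V (x) V -> V (x) V *)
Variables (one : V -> R) (D : int -> V -> V) (Y : int -> V -> T2)
          (S : int -> V -> V -> T2).

Definition Sx (k : int) (t : T2) : T2 := flatten [seq S k p.1 p.2 | p <- t].
Definition Yl (k : int) (t : T2) : T3 :=
  flatten [seq [seq (q.1, q.2, p.2) | q <- Y k p.1] | p <- t].
Definition Yr (k : int) (t : T2) : T3 :=
  flatten [seq [seq (p.1, q.1, q.2) | q <- Y k p.2] | p <- t].
Definition Sl (k : int) (t : T3) : T3 :=
  flatten [seq [seq (q.1, q.2, p.2) | q <- S k p.1.1 p.1.2] | p <- t].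
Definition Sr (k : int) (t : T3) : T3 :=
  flatten [seq [seq (p.1.1, q.1, q.2) | q <- S k p.1.2 p.2] | p <- t].
Definition Dr (k : int) (t : T2) : T2 := [seq (p.1, D k p.2) | p <- t].

Record is_bmvc : Prop := BMVC {
  dual_linear : forall f, Vd f -> forall (c : R) a b, f (c *: a + b) = c * f a + f b;
  dual_zero : Vd (fun _ => 0);
  dual_add : forall f g, Vd f -> Vd g -> Vd (fun a => f a + g a);
  dual_scale : forall (c : R) f, Vd f -> Vd (fun a => c * f a);
  covacuum_dual : Vd one;
  (* D(z) : V -> V[z^{+-1}] R-linear, D(z)D(w) = D(zw) *)
  D_linear : forall k (c : R) a b, D k (c *: a + b) = c *: D k a + D k b;
  D_finite : forall a, exists N : nat, forall k : int, N%:Z < `|k| -> D k a = 0;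
  D_mult : forall j k a, D j (D k a) = if j == k then D k a else 0;
  (* Y(z) : V -> (V (x) V)((z^-1)) R-linear *)
  Y_linear : forall k (c : R) a b,
    teq2 (Y k (c *: a + b)) (tscale2 c (Y k a) ++ Y k b);
  Y_trunc : forall a, exists N : int, forall k, N < k -> teq2 (Y k a) [::];
  (* S(z) : V (x) V -> (V (x) V)((z^-1)) R-linear *)
  S_linear_l : forall k (c : R) v v' u,
    teq2 (S k (c *: v + v') u) (tscale2 c (S k v u) ++ S k v' u);
  S_linear_r : forall k (c : R) v u u',
    teq2 (S k v (c *: u + u')) (tscale2 c (S k v u) ++ S k v u');
  S_trunc : forall v u, exists N : int, forall k, N < k -> teq2 (S k v u) [::];
  (* unitarity  S(z^-1) S(z) = id  (coefficient of z^n) *)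
  S_unitary : forall (t : T2) (n : int),
    tsums2 (fun l => Sx l (Sx (n + l) t)) (if n == 0 then t else [::]);
  covac_left : forall k a,
    \sum_(p <- Y k a) one p.1 *: p.2 = if k == 0 then a else 0;
  covac_right : forall a, exists N : nat,
    (forall k : int, N%:Z < `|k| -> \sum_(p <- Y k a) one p.2 *: p.1 = 0) /\
    \sum_(i < N.*2.+1) \sum_(p <- Y (i%:Z - N%:Z) a) one p.2 *: p.1 = a;
  covac_S : forall k v u,
    \sum_(p <- S k v u) one p.1 *: p.2 = if k == 0 then one u *: v else 0;
  (* skew symmetry  S(z^-1) Y(z) = Y(z^-1) D(z), left side well defined *)
  skew_symmetry : forall a (n : int), exists t : T2,
    tsums2 (fun l => Sx l (Y (n + l) a)) t /\
    tsums2 (fun j => Y (j - n) (D j a)) t;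
  (* weak coassociativity  (Y(z) (x) id) Y(w) === (id (x) Y(w)) Y(zw) *)
  weak_coassoc : forall psi, dual3 psi ->
    formal_equiv Vd
      (fun m n l a => pair3 psi (single l (Yl m (Y n a))))
      (fun m n l a => pair3 psi (single l (Yr (n - m) (Y m a))));
  (* Yang-Baxter
     (S(z)(x)id)(id(x)S(zw))(S(w)(x)id) === (id(x)S(w))(S(zw)(x)id)(id(x)S(z)) *)
  yang_baxter : forall psi, dual3 psi ->
    formal_equiv Vd3
      (fun m n j t => pair3 psi (Sl (m - j) (Sr j (Sl (n - j) t))))
      (fun m n j t => pair3 psi (Sr (n - j) (Sl j (Sr (m - j) t))));
  (* (Y(z)(x)id) S(w) === (id(x)S(w))(S(zw)(x)id)(id(x)Y(z)) *)
  yang_baxter_Y : forall psi, dual3 psi ->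
    formal_equiv Vd2
      (fun m n l t => pair3 psi (single l (Yl m (Sx n t))))
      (fun m n j t => pair3 psi (Sr (n - j) (Sl j (Yr (m - j) t))))
}.

(* (1) translation:  Y(z) D(w) === (id (x) D(w)) Y(zw) *)
Definition translation_law : Prop :=
  forall psi, dual2 psi ->
    formal_equiv Vd
      (fun m n l a => pair2 psi (single l (Y m (D n a))))
      (fun m n l a => pair2 psi (single l (Dr (n - m) (Y m a)))).

(* (2) colocality:
   (S(w/z) (x) id)(id (x) Y(w)) Y(z) === (id (x) Y(z)) Y(w) *)
Definition colocality_law : Prop :=
  forall psi, dual3 psi ->
    formal_equiv Vd
      (fun m n l a => pair3 psi (Sl l (Yr (n - l) (Y (m + l) a))))
      (fun m n l a => pair3 psi (single l (Yr m (Y n a)))).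

End BMVC.

(* Skew symmetry, paired with the covacuum in the first factor, gives
   D(z) = (id ⊗ 1^∨) Y(z).  Pairing weak coassociativity with 1^∨ in the third
   factor then yields the translation property, and pairing it with 1^∨ in the
   middle factor gives, coefficientwise, (D_m ⊗ id) Y_k = [k = m] Y_m.
   For colocality, weak coassociativity (applied after S ⊗ id, which preserves
   the restricted dual thanks to the Yang-Baxter axiom for Y) rewrites the left
   side as (S(w/z) Y(z/w) ⊗ id) Y(w); skew symmetry turns S(w/z) Y(z/w) into
   Y(w/z) D(z/w), and translation together with the identity for (D ⊗ id) Y
   collapses the remaining sum to the single term (id ⊗ Y(z)) Y(w). *)

From mathcomp Require Import all_boot all_order all_algebra zify.
From Stdlib Require Import FunctionalExtensionality.
Set Implicit Arguments. Unset Strict Implicit. Unset Printing Implicit Defensive.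
Import Order.TTheory GRing.Theory Num.Theory.
Local Open Scope ring_scope.

Section FiniteSums.
Variable M : zmodType.
Implicit Types (g : int -> M) (r : M).

Definition supported_in (N : nat) g := forall l : int, N%:Z < `|l| -> g l = 0.

Definition wsum (N : nat) g : M := \sum_(i < N.*2.+1) g (i%:Z - N%:Z).

(* Convertible to [sums] when [M := R]. *)
Definition fsums g r := exists N, supported_in N g /\ r = wsum N g.

Lemma wsumS N g : wsum N.+1 g = g (- N.+1%:Z) + wsum N g + g N.+1%:Z.
Proof.
rewrite /wsum doubleS big_ord_recl big_ord_recr /= -addrA; congr (_ + (_ + _)).
- by congr g; lia.
- by apply: eq_bigr => i _; congr g; rewrite /bump /=; move: (nat_of_ord i) => k; lia.
- by congr g; rewrite /bump /=; lia.
Qed.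

Lemma wsum_widen N N' g : supported_in N g -> (N <= N')%N -> wsum N' g = wsum N g.
Proof.
move=> Hg /subnKC <-; elim: (N' - N)%N => [|k IH]; first by rewrite addn0.
by rewrite addnS wsumS IH !Hg ?addr0 ?add0r //; lia.
Qed.

Lemma wsum_delta N g j :
  (forall l, l != j -> g l = 0) -> `|j| <= N%:Z -> wsum N g = g j.
Proof.
move=> Hg Hj; have Hi : (absz (j + N%:Z)%R < N.*2.+1)%N by lia.
rewrite /wsum (bigD1 (Ordinal Hi)) //= big1 ?addr0; first by congr g; lia.
move=> i /eqP Hne; apply: Hg; apply/eqP => E; apply: Hne; apply/val_inj => /=; lia.
Qed.

Lemma fsums_wsum N g r : fsums g r -> supported_in N g -> r = wsum N g.
Proof.
move=> [N0 [H0 ->]] HN; case: (leqP N0 N) => [le|/ltnW le].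
  by rewrite (wsum_widen H0 le).
by rewrite (wsum_widen HN le).
Qed.

Lemma fsums_delta g j r : (forall l, l != j -> g l = 0) -> fsums g r -> r = g j.
Proof.
move=> Hg [N [HN ->]]; rewrite -(@wsum_widen N (maxn N (absz j)) g) //; last by lia.
by apply: wsum_delta => //; lia.
Qed.

Lemma fsums_deltaI g j : (forall l, l != j -> g l = 0) -> fsums g (g j).
Proof.
move=> Hg; exists (absz j); split; last by rewrite (wsum_delta Hg) //; lia.
by move=> l Hl; apply: Hg; apply/eqP => E; move: Hl; rewrite E; lia.
Qed.

Lemma fsums0 : fsums (fun=> 0) 0.
Proof. by exists 0%N; split => //; rewrite /wsum big1. Qed.

Lemma fsumsD g1 g2 r1 r2 :
  fsums g1 r1 -> fsums g2 r2 -> fsums (fun l => g1 l + g2 l) (r1 + r2).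
Proof.
move=> h1 h2; have [N1 [H1 _]] := h1; have [N2 [H2 _]] := h2.
have S1 : supported_in (maxn N1 N2) g1 by move=> l Hl; apply: H1; lia.
have S2 : supported_in (maxn N1 N2) g2 by move=> l Hl; apply: H2; lia.
exists (maxn N1 N2); split; first by move=> l Hl; rewrite S1 ?S2 ?addr0.
by rewrite (fsums_wsum h1 S1) (fsums_wsum h2 S2) /wsum -big_split.
Qed.

Lemma eq_fsums g1 g2 r : g1 =1 g2 -> fsums g1 r -> fsums g2 r.
Proof. by move=> /functional_extensionality ->. Qed.

Lemma fsums_single (X : Type) (h : seq X -> M) (t : seq X) :
  h [::] = 0 -> fsums (fun l => h (single l t)) (h t).
Proof.
move=> h0; apply: (@fsums_deltaI (fun l => h (single l t)) 0).
by move=> l /negbTE; rewrite /single => ->.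
Qed.

Lemma fsums_singleE (X : Type) (h : seq X -> M) (t : seq X) r :
  h [::] = 0 -> fsums (fun l => h (single l t)) r -> r = h t.
Proof.
move=> h0 hs; rewrite (fsums_delta (j := 0) _ hs) /single ?eqxx //.
by move=> l /negbTE ->.
Qed.

End FiniteSums.

Lemma fsumsMl (K : pzRingType) (g : int -> K) r c :
  fsums g r -> fsums (fun l => c * g l) (c * r).
Proof.
move=> [N [HN ->]]; exists N; split; first by move=> l Hl; rewrite HN ?mulr0.
by rewrite /wsum mulr_sumr.
Qed.

Lemma fsums_combine (K : pzRingType) (I : Type) (s : seq I) (c : I -> K)
    (F G : I -> int -> K) :
  (forall i, exists r, fsums (F i) r /\ fsums (G i) r) ->
  exists r, fsums (fun l => \sum_(i <- s) c i * F i l) r /\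
            fsums (fun l => \sum_(i <- s) c i * G i l) r.
Proof.
move=> HFG; elim: s => [|i s [r [hF hG]]].
  by exists 0; split; apply: eq_fsums (fsums0 K) => l; rewrite big_nil.
have [ri [hFi hGi]] := HFG i.
exists (c i * ri + r); split.
  by apply: eq_fsums (fsumsD (fsumsMl (c i) hFi) hF) => l; rewrite big_cons.
by apply: eq_fsums (fsumsD (fsumsMl (c i) hGi) hG) => l; rewrite big_cons.
Qed.

Lemma formal_equiv_single (R : comNzRingType) (X T : Type) (Xd : (X -> R) -> Prop)
    (h : seq T -> R) (A : int -> int -> X -> seq T) (G : int -> int -> int -> X -> R) :
  h [::] = 0 -> formal_equiv Xd (fun m n l x => h (single l (A m n x))) G ->
  [/\ forall m n x, fsums (fun l => G m n l x) (h (A m n x)),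
      forall m n, Xd (fun x => h (A m n x)) &
      exists N : int, forall m n x, (N < m \/ N < n) -> h (A m n x) = 0].
Proof.
move=> h0 [c [hc [hXd [N hN]]]].
have cA m n x : c m n x = h (A m n x) by exact: fsums_singleE h0 (hc m n x).1.
split=> [m n x | m n | ]; first by rewrite -cA; exact: (hc m n x).2.
  by rewrite -(functional_extensionality _ _ (cA m n)).
by exists N => m n x hmn; rewrite -cA hN.
Qed.

Section BraidedVertexCoalgebra.
Variables (R : comNzRingType) (V : lmodType R) (Vd : (V -> R) -> Prop)
    (one : V -> R) (D : int -> V -> V) (Y : int -> V -> T2 V)
    (S : int -> V -> V -> T2 V).
Hypothesis H : is_bmvc Vd one D Y S.
Let Vd_one : Vd one := covacuum_dual H.

Definition tpair (f g : V -> R) (t : T2 V) : R := \sum_(p <- t) f p.1 * g p.2.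

Lemma eq_tpair f f' g g' t : f =1 f' -> g =1 g' -> tpair f g t = tpair f' g' t.
Proof. by move=> ef eg; apply: eq_bigr => p _; rewrite ef eg. Qed.

Lemma pair2_nil (psi : seq ((V -> R) * (V -> R))) : pair2 psi [::] = 0 :> R.
Proof. by rewrite /pair2 big1 // => f _; rewrite big_nil. Qed.

Lemma pair3_nil (psi : seq ((V -> R) * (V -> R) * (V -> R))) : pair3 psi [::] = 0 :> R.
Proof. by rewrite /pair3 big1 // => f _; rewrite big_nil. Qed.

Lemma pair2_cons f g (psi : seq ((V -> R) * (V -> R))) (t : T2 V) :
  pair2 ((f, g) :: psi) t = tpair f g t + pair2 psi t.
Proof. by rewrite /pair2 big_cons. Qed.

Lemma pair3_cons f (psi : seq ((V -> R) * (V -> R) * (V -> R))) (t : T3 V) :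
  pair3 (f :: psi) t = pair3 [:: f] t + pair3 psi t.
Proof. by rewrite /pair3 big_cons big_seq1. Qed.

Lemma pair3_Yl f1 f2 f3 k t :
  pair3 [:: (f1, f2, f3)] (Yl Y k t) = tpair (fun x => tpair f1 f2 (Y k x)) f3 t.
Proof.
rewrite /pair3 big_seq1 /Yl big_flatten big_map /=.
by apply: eq_bigr => p _; rewrite big_map mulr_suml.
Qed.

Lemma pair3_Yr f1 f2 f3 k t :
  pair3 [:: (f1, f2, f3)] (Yr Y k t) = tpair f1 (fun x => tpair f2 f3 (Y k x)) t.
Proof.
rewrite /pair3 big_seq1 /Yr big_flatten big_map /=.
by apply: eq_bigr => p _; rewrite big_map mulr_sumr; apply: eq_bigr => q _; rewrite mulrA.
Qed.

Lemma pair3_Sl f1 f2 f3 k t :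
  pair3 [:: (f1, f2, f3)] (Sl S k t) =
  \sum_(p <- t) tpair f1 f2 (S k p.1.1 p.1.2) * f3 p.2.
Proof.
rewrite /pair3 big_seq1 /Sl big_flatten big_map /=.
by apply: eq_bigr => p _; rewrite big_map mulr_suml.
Qed.

Lemma pair3_Sl_Yl f1 f2 f3 l k t :
  pair3 [:: (f1, f2, f3)] (Sl S l (Yl Y k t)) =
  tpair (fun x => tpair f1 f2 (Sx S l (Y k x))) f3 t.
Proof.
rewrite pair3_Sl /Yl big_flatten big_map; apply: eq_bigr => p _.
by rewrite big_map /tpair /Sx big_flatten big_map mulr_suml.
Qed.

Section DualLinear.
Variable f : V -> R.
Hypothesis hf : Vd f.

Lemma dual_lin0 : f 0 = 0.
Proof. by have := dual_linear H hf (-1) 0 0; rewrite scaler0 addr0 mulN1r addNr. Qed.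

Lemma dual_linD a b : f (a + b) = f a + f b.
Proof. by rewrite -{1}(scale1r a) (dual_linear H hf) mul1r. Qed.

Lemma dual_linZ c a : f (c *: a) = c * f a.
Proof. by rewrite -(addr0 (c *: a)) (dual_linear H hf) dual_lin0 addr0. Qed.

Lemma dual_lin_sum (I : Type) (s : seq I) (F : I -> V) :
  f (\sum_(i <- s) F i) = \sum_(i <- s) f (F i).
Proof. exact: (big_morph f dual_linD dual_lin0). Qed.

End DualLinear.

Lemma bilinear_tpair f g : Vd f -> Vd g ->
  bilinear_map (M := R^o) (fun x y => (f x * g y : R^o)).
Proof.
move=> hf hg; split => c x x' y /=.
  by rewrite (dual_linear H hf) mulrDl -mulrA.
by rewrite (dual_linear H hg) mulrDr mulrCA.
Qed.

Lemma bilinear_covacuum : bilinear_map (M := V) (fun x y => one x *: y).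
Proof.
split => c x x' y /=; last by rewrite scalerDr !scalerA mulrC.
by rewrite (dual_linear H Vd_one) scalerDl scalerA.
Qed.

Lemma teq2_tpair f g t t' : Vd f -> Vd g -> teq2 t t' -> tpair f g t = tpair f g t'.
Proof. by move=> hf hg Ht; exact: (Ht _ _ (bilinear_tpair hf hg)). Qed.

Lemma tsums2_fsums (M : lmodType R) (b : V -> V -> M) F t :
  bilinear_map b -> tsums2 F t ->
  fsums (fun l => \sum_(p <- F l) b p.1 p.2) (\sum_(p <- t) b p.1 p.2).
Proof.
move=> hb [N [HN Ht]]; exists N; split.
  by move=> l Hl; have := HN l Hl M b hb; rewrite big_nil.
rewrite (Ht M b hb) /wsum big_flatten big_map.
rewrite -(big_mkord xpredT (fun i : nat => \sum_(p <- F (i%:Z - N%:Z)) b p.1 p.2)).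
by rewrite /index_iota subn0.
Qed.

Lemma tsums2_tpair f g F t : Vd f -> Vd g -> tsums2 F t ->
  fsums (fun l => tpair f g (F l)) (tpair f g t).
Proof. by move=> hf hg; exact: (tsums2_fsums (bilinear_tpair hf hg)). Qed.

Lemma tpair_Y_sum f g k (I : Type) (s : seq I) (c : I -> R) (x : I -> V) :
  Vd f -> Vd g ->
  tpair f g (Y k (\sum_(i <- s) c i *: x i)) = \sum_(i <- s) c i * tpair f g (Y k (x i)).
Proof.
move=> hf hg.
have tpairY c' a b :
    tpair f g (Y k (c' *: a + b)) = c' * tpair f g (Y k a) + tpair f g (Y k b).
  rewrite (teq2_tpair hf hg (Y_linear H k c' a b)) /tpair big_cat big_map mulr_sumr /=.
  by congr (_ + _); apply: eq_bigr => p _; rewrite dual_linZ // mulrA.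
have tpairY0 : tpair f g (Y k 0) = 0.
  by have := tpairY (-1) 0 0; rewrite scaler0 addr0 mulN1r addNr.
elim: s => [|i s IH]; first by rewrite !big_nil.
by rewrite !big_cons tpairY IH.
Qed.

Lemma covacuum_tpair g k x : Vd g -> tpair one g (Y k x) = if k == 0 then g x else 0.
Proof.
move=> hg; rewrite /tpair.
under eq_bigr do rewrite -dual_linZ //.
by rewrite -dual_lin_sum // (covac_left H); case: eqP => // _; rewrite dual_lin0.
Qed.

Lemma D_as_Y n a : D n a = \sum_(p <- Y n a) one p.2 *: p.1.
Proof.
have [t [hS hD]] := skew_symmetry H a n.
have covS l : \sum_(q <- Sx S l (Y (n + l) a)) one q.1 *: q.2 =
              if l == 0 then \sum_(p <- Y n a) one p.2 *: p.1 else 0.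
  rewrite /Sx big_flatten big_map; under eq_bigr do rewrite (covac_S H).
  by case: eqP => [->|_]; [rewrite addr0 | rewrite big1].
have covY j : \sum_(q <- Y (j - n) (D j a)) one q.1 *: q.2 = if j == n then D n a else 0.
  by rewrite (covac_left H) subr_eq0; case: eqP => [->|].
transitivity (\sum_(q <- t) one q.1 *: q.2).
  rewrite (fsums_delta (j := n) _ (tsums2_fsums bilinear_covacuum hD)).
    by rewrite covY eqxx.
  by move=> j /negbTE hj; rewrite covY hj.
rewrite (fsums_delta (j := 0) _ (tsums2_fsums bilinear_covacuum hS)).
  by rewrite (covS 0) eqxx.
by move=> l /negbTE hl; rewrite covS hl.
Qed.

Lemma dual_D f n a : Vd f -> f (D n a) = tpair f one (Y n a).
Proof.
move=> hf; rewrite D_as_Y dual_lin_sum //; apply: eq_bigr => p _.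
by rewrite dual_linZ // mulrC.
Qed.

Lemma coassoc_pair3 psi m n a : dual3 Vd psi ->
  pair3 psi (Yl Y m (Y n a)) = pair3 psi (Yr Y (n - m) (Y m a)).
Proof.
move=> hpsi; have [hs _ _] := formal_equiv_single (pair3_nil psi) (weak_coassoc H hpsi).
exact: fsums_singleE (pair3_nil psi) (hs m n a).
Qed.

Lemma coassoc_dual psi m n : dual3 Vd psi -> Vd (fun a => pair3 psi (Yl Y m (Y n a))).
Proof. by move=> hpsi; case: (formal_equiv_single (pair3_nil psi) (weak_coassoc H hpsi)). Qed.

Lemma coassoc_bounded psi : dual3 Vd psi ->
  exists N : int, forall m n a, (N < m \/ N < n) -> pair3 psi (Yl Y m (Y n a)) = 0.
Proof. by move=> hpsi; case: (formal_equiv_single (pair3_nil psi) (weak_coassoc H hpsi)). Qed.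

Lemma coassoc_tpair f1 f2 f3 m n a : Vd f1 -> Vd f2 -> Vd f3 ->
  tpair (fun x => tpair f1 f2 (Y m x)) f3 (Y n a) =
  tpair f1 (fun x => tpair f2 f3 (Y (n - m) x)) (Y m a).
Proof. by move=> h1 h2 h3; rewrite -pair3_Yl -pair3_Yr coassoc_pair3. Qed.

Lemma dual_comp_D f n : Vd f -> Vd (fun a => f (D n a)).
Proof.
move=> hf; have h : dual3 Vd [:: (one, f, one)] by [].
have := coassoc_dual 0 n h; congr Vd; apply: functional_extensionality => a.
rewrite pair3_Yl dual_D //; apply: eq_tpair => // x.
by rewrite covacuum_tpair.
Qed.

Lemma tpair_Y_D_covacuum f g m n a : Vd f -> Vd g ->
  tpair f g (Y m (D n a)) = tpair (fun x => tpair f g (Y m x)) one (Y n a).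
Proof.
move=> hf hg; rewrite D_as_Y tpair_Y_sum //.
by apply: eq_bigr => p _; rewrite mulrC.
Qed.

Lemma tpair_Y_D f g m n a : Vd f -> Vd g ->
  tpair f g (Y m (D n a)) = tpair f (fun x => g (D (n - m) x)) (Y m a).
Proof.
move=> hf hg; rewrite tpair_Y_D_covacuum // coassoc_tpair //.
by apply: eq_tpair => // x; rewrite dual_D.
Qed.

Lemma tpair_D_Y f g m k u : Vd f -> Vd g ->
  tpair (fun x => f (D m x)) g (Y k u) = if k == m then tpair f g (Y m u) else 0.
Proof.
move=> hf hg.
rewrite (eq_tpair _ (fun x => dual_D m x hf) (frefl g)) coassoc_tpair //.
rewrite (eq_tpair _ (frefl f) (fun x => covacuum_tpair (k - m) x hg)) subr_eq0.
by case: eqP => _; [apply: eq_tpair | rewrite /tpair big1 // => p _; rewrite mulr0].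
Qed.

Lemma tpair_Y_bounded f g : Vd f -> Vd g ->
  exists N : int, forall k u, N < k -> tpair f g (Y k u) = 0.
Proof.
move=> hf hg; have h : dual3 Vd [:: (one, f, g)] by [].
have [N hN] := coassoc_bounded h.
exists N => k u hk; rewrite -(hN 0 k u (or_intror hk)) pair3_Yl.
by apply: eq_tpair => // x; rewrite covacuum_tpair.
Qed.

Lemma Yr_bounded psi : dual3 Vd psi ->
  exists N : int, forall k t, N < k -> pair3 psi (Yr Y k t) = 0.
Proof.
elim: psi => [_|[[f1 f2] f3] psi IH [[/= h1 h2 h3] /IH [N1 hN1]]].
  by exists 0 => k t _; rewrite /pair3 big_nil.
have [N2 hN2] := tpair_Y_bounded h2 h3.
exists (Posz (absz N1 + absz N2)) => k t hk.
rewrite pair3_cons pair3_Yr hN1 ?addr0; last by lia.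
by apply: big1 => p _ /=; rewrite hN2 ?mulr0 //; lia.
Qed.

Lemma dual2_tpair_Sx f1 f2 l : Vd f1 -> Vd f2 ->
  Vd2 Vd (fun t => tpair f1 f2 (Sx S l t)).
Proof.
move=> h1 h2; have h : dual3 Vd [:: (one, f1, f2)] by [].
have [_ hVd _] := formal_equiv_single (pair3_nil _) (yang_baxter_Y H h).
have -> // : (fun t => tpair f1 f2 (Sx S l t)) =
             (fun t => pair3 [:: (one, f1, f2)] (Yl Y 0 (Sx S l t))).
apply: functional_extensionality => t; rewrite pair3_Yl.
by apply: eq_tpair => // x; rewrite covacuum_tpair.
Qed.

Lemma dual3_pair3_Sl f1 f2 f3 l : Vd f1 -> Vd f2 -> Vd f3 ->
  exists psi, dual3 Vd psi /\ forall t, pair3 [:: (f1, f2, f3)] (Sl S l t) = pair3 psi t.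
Proof.
move=> h1 h2 h3; have [phi [hphi Ephi]] := dual2_tpair_Sx l h1 h2.
exists [seq (g.1, g.2, f3) | g <- phi]; split.
  by elim: phi hphi {Ephi} => //= g phi IH [[g1 g2] /IH].
move=> t; rewrite pair3_Sl /pair3 big_map exchange_big /=.
apply: eq_bigr => p _; have := Ephi [:: (p.1.1, p.1.2)].
rewrite /Sx /= cats0 => ->; rewrite /pair2 mulr_suml.
by apply: eq_bigr => g _; rewrite big_seq1.
Qed.

Lemma coassoc_Sl f1 f2 f3 l m n a : Vd f1 -> Vd f2 -> Vd f3 ->
  pair3 [:: (f1, f2, f3)] (Sl S l (Yr Y (n - m) (Y m a))) =
  pair3 [:: (f1, f2, f3)] (Sl S l (Yl Y m (Y n a))).
Proof.
move=> h1 h2 h3; have [psi [hpsi Epsi]] := dual3_pair3_Sl l h1 h2 h3.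
by rewrite !Epsi coassoc_pair3.
Qed.

Lemma skew_symmetry_tpair f g m b : Vd f -> Vd g ->
  exists r, fsums (fun l => tpair f g (Sx S l (Y (m + l) b))) r /\
            fsums (fun j => tpair f g (Y (j - m) (D j b))) r.
Proof.
move=> hf hg; have [t [hS hD]] := skew_symmetry H b m.
by exists (tpair f g t); split; apply: tsums2_tpair.
Qed.

Lemma tpair_Y_D_delta f1 f2 f3 m n j a : Vd f1 -> Vd f2 -> Vd f3 ->
  tpair (fun x => tpair f1 f2 (Y (j - m) (D j x))) f3 (Y (n + m) a) =
  if j == n + m then tpair f1 (fun x => tpair f2 f3 (Y m x)) (Y n a) else 0.
Proof.
move=> h1 h2 h3; have h2D := dual_comp_D m h2.
have YD x :
    tpair f1 f2 (Y (j - m) (D j x)) = tpair f1 (fun y => f2 (D m y)) (Y (j - m) x).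
  by rewrite tpair_Y_D // (_ : j - (j - m) = m) //; lia.
rewrite (eq_tpair _ YD (frefl f3)).
rewrite coassoc_tpair // (eq_tpair _ (frefl f1) (fun x => tpair_D_Y _ _ x h2 h3)).
have -> : (n + m - (j - m) == m) = (j == n + m) by apply/eqP/eqP; lia.
case: eqP => [->|_]; first by rewrite (_ : n + m - m = n) //; lia.
by apply: big1 => p _; rewrite mulr0.
Qed.

Lemma colocality_pure f1 f2 f3 m n a : Vd f1 -> Vd f2 -> Vd f3 ->
  fsums (fun l => pair3 [:: (f1, f2, f3)] (Sl S l (Yr Y (n - l) (Y (m + l) a))))
        (pair3 [:: (f1, f2, f3)] (Yr Y m (Y n a))).
Proof.
move=> h1 h2 h3.
have [r [hl hj]] := fsums_combine (Y (n + m) a) (fun p => f3 p.2)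
  (F := fun p l => tpair f1 f2 (Sx S l (Y (m + l) p.1)))
  (G := fun p j => tpair f1 f2 (Y (j - m) (D j p.1)))
  (fun p => skew_symmetry_tpair m p.1 h1 h2).
have Ej j : \sum_(p <- Y (n + m) a) f3 p.2 * tpair f1 f2 (Y (j - m) (D j p.1)) =
            if j == n + m then pair3 [:: (f1, f2, f3)] (Yr Y m (Y n a)) else 0.
  rewrite pair3_Yr -tpair_Y_D_delta //; apply: eq_bigr => p _; exact: mulrC.
have -> : pair3 [:: (f1, f2, f3)] (Yr Y m (Y n a)) = r.
  have := Ej (n + m); rewrite eqxx => <-.
  by apply/esym/(fsums_delta _ hj) => j /negbTE hj'; rewrite Ej hj'.
apply: eq_fsums hl => l; rewrite (_ : n - l = n + m - (m + l)); last by lia.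
rewrite coassoc_Sl // pair3_Sl_Yl; apply: eq_bigr => p _; exact: mulrC.
Qed.

Lemma fsums_pair3 psi (F : int -> T3 V) (t : T3 V) : dual3 Vd psi ->
  (forall f1 f2 f3, Vd f1 -> Vd f2 -> Vd f3 ->
     fsums (fun l => pair3 [:: (f1, f2, f3)] (F l)) (pair3 [:: (f1, f2, f3)] t)) ->
  fsums (fun l => pair3 psi (F l)) (pair3 psi t).
Proof.
move=> + hpure; elim: psi => [_|[[f1 f2] f3] psi IH [[/= h1 h2 h3] /IH hpsi]].
  by rewrite {2}/pair3 big_nil; apply: eq_fsums (fsums0 R) => l; rewrite /pair3 big_nil.
rewrite (pair3_cons _ psi); apply: eq_fsums (fsumsD (hpure _ _ _ h1 h2 h3) hpsi) => l.
by rewrite (pair3_cons _ psi).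
Qed.

Lemma pair2_Y_D psi m n a : dual2 Vd psi ->
  pair2 psi (Y m (D n a)) = pair2 psi (Dr D (n - m) (Y m a)).
Proof.
elim: psi => [_|[f g] psi IH [[/= hf hg] /IH E]]; first by rewrite /pair2 !big_nil.
by rewrite !pair2_cons E tpair_Y_D // /Dr /tpair big_map.
Qed.

Lemma translation : translation_law Vd D Y.
Proof.
move=> psi hpsi.
have [h3 E3] : let psi3 := [seq (fg.1, fg.2, one) | fg <- psi] in dual3 Vd psi3 /\
    forall m n a, pair3 psi3 (Yl Y m (Y n a)) = pair2 psi (Y m (D n a)).
  elim: psi hpsi => [_|[f g] psi IH [[/= hf hg] /IH [h3 E3]]].
    by split=> // m n a; rewrite /pair3 /pair2 !big_nil.
  split=> [|m n a]; first by do !split.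
  by rewrite /= pair3_cons pair3_Yl E3 -tpair_Y_D_covacuum // pair2_cons.
have [N hN] := coassoc_bounded h3.
exists (fun m n a => pair2 psi (Y m (D n a))); split; [|split].
- move=> m n a; split; first exact: fsums_single (pair2_nil psi).
  rewrite pair2_Y_D //; exact: fsums_single (pair2_nil psi).
- move=> m n; rewrite -(functional_extensionality _ _ (E3 m n)); exact: coassoc_dual.
- by exists N => m n a hmn; rewrite -E3 hN.
Qed.

Lemma colocality : colocality_law Vd Y S.
Proof.
move=> psi hpsi.
have [N0 hN0] := coassoc_bounded hpsi; have [N1 hN1] := Yr_bounded hpsi.
have YrE m n a : pair3 psi (Yr Y m (Y n a)) = pair3 psi (Yl Y n (Y (m + n) a)).
  by rewrite coassoc_pair3 // addrK.
exists (fun m n a => pair3 psi (Yr Y m (Y n a))); split; [|split].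
- move=> m n a; split; last exact: fsums_single (pair3_nil psi).
  by apply: fsums_pair3 => // f1 f2 f3; exact: colocality_pure.
- by move=> m n; rewrite (functional_extensionality _ _ (YrE m n)); exact: coassoc_dual.
- exists (Posz (absz N0 + absz N1)) => m n a [hm|hn]; first by apply: hN1; lia.
  by rewrite YrE hN0 //; left; lia.
Qed.

End BraidedVertexCoalgebra.

Theorem lemma3p1p5 (R : comNzRingType) (V : lmodType R) (Vd : (V -> R) -> Prop)
    (one : V -> R) (D : int -> V -> V) (Y : int -> V -> T2 V)
    (S : int -> V -> V -> T2 V)
    (H : is_bmvc Vd one D Y S) :
  translation_law Vd D Y /\ colocality_law Vd Y S.
Proof. by split; [exact: translation H | exact: colocality H]. Qed.
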